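(* Let $P$ be a distribution on $\mathcal X\times\{-1,+1\}$ with $\mathcal X\subseteq\mathbb R^d$, let $R>0$, $\mathscr W=\{\mathbf w\in\mathbb R^d:\|\mathbf w\|\le R\}$, and let $\ell:\mathbb R\to\mathbb R_+$ be a convex differentiable loss, with $\mathbf w_*\in\arg\min_{\mathbf w\in\mathscr W}\mathrm E[\ell(y\mathbf w^\top\mathbf x)]$. Suppose (i) there is $q>0$ with $\Pr(y=1\mid\mathbf x)\ge q$ and $\Pr(y=-1\mid\mathbf x)\ge q$ for every $\mathbf x\in\mathcal X$, and (ii) $\ell'(0)>0$. Then Assumption (I) and Assumption (II) hold with a constant $\theta\ge q[\ell'(0)]^2$.
   Context: Assumption (I): there is $\theta>0$ with $\mathrm E[(\ell'(y\mathbf w_*^\top\mathbf x))^2\mathbf x\mathbf x^\top]\succeq\theta\,\mathrm E[\mathbf x\mathbf x^\top]$. Assumption (II): there is $\theta>0$ with $\mathrm E[(\ell'(y\mathbf w^\top\mathbf x))^2\mathbf x\mathbf x^\top]\succeq\theta\,\mathrm E[\mathbf x\mathbf x^\top]$ for all $\mathbf w\in\mathscr W$. Expectations are over $(\mathbf x,y)\sim P$; $\succeq$ is the Loewner order. *)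

From HB Require Import structures.
From mathcomp Require Import all_boot all_order all_algebra.
From mathcomp Require Import all_classical all_reals all_analysis.
Set Implicit Arguments. Unset Strict Implicit. Unset Printing Implicit Defensive.
Import Order.TTheory GRing.Theory Num.Theory.
Import numFieldNormedType.Exports.
Local Open Scope classical_set_scope.
Local Open Scope ring_scope.

Definition dotv (R : realType) (d : nat) (u v : 'cV[R]_d) : R :=
  \sum_(i < d) u i 0 * v i 0.
Definition enorm (R : realType) (d : nat) (w : 'cV[R]_d) : R :=
  Num.sqrt (dotv w w).

Definition loewner_ge (R : realType) (d : nat) (A B : 'M[R]_d) : Prop :=
  forall v : 'cV[R]_d, 0 <= (v^T *m (A - B) *m v) 0 0.

(* The distribution P of (x, y) on X x {-1,+1} is given by:
   - a probability space (T, mu) and a feature map xf : T -> R^d (the law of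
     x is the pushforward of mu by xf), and
   - the conditional probability eta x = Pr(y = 1 | x)
     (so Pr(y = -1 | x) = 1 - eta x). *)
Definition Ejoint (R : realType) (dT : measure_display) (T : measurableType dT)
  (mu : probability T R) (d : nat) (xf : T -> 'cV[R]_d) (eta : 'cV[R]_d -> R)
  (f : 'cV[R]_d -> R -> R) : R :=
  \int[mu]_(t in setT)
     (eta (xf t) * f (xf t) 1 + (1 - eta (xf t)) * f (xf t) (-1)).

Definition Emx (R : realType) (dT : measure_display) (T : measurableType dT)
  (mu : probability T R) (d : nat) (xf : T -> 'cV[R]_d) (eta : 'cV[R]_d -> R)
  (F : 'cV[R]_d -> R -> 'M[R]_d) : 'M[R]_d :=
  \matrix_(i, j) Ejoint mu xf eta (fun x y => F x y i j).

Definition grad_cov (R : realType) (dT : measure_display) (T : measurableType dT)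
  (mu : probability T R) (d : nat) (xf : T -> 'cV[R]_d) (eta : 'cV[R]_d -> R)
  (l : R -> R) (w : 'cV[R]_d) : 'M[R]_d :=
  Emx mu xf eta (fun x y => ((derive1 l (y * dotv w x)) ^+ 2) *: (x *m x^T)).

Definition second_moment (R : realType) (dT : measure_display) (T : measurableType dT)
  (mu : probability T R) (d : nat) (xf : T -> 'cV[R]_d) (eta : 'cV[R]_d -> R)
  : 'M[R]_d :=
  Emx mu xf eta (fun x _ => x *m x^T).

Definition risk (R : realType) (dT : measure_display) (T : measurableType dT)
  (mu : probability T R) (d : nat) (xf : T -> 'cV[R]_d) (eta : 'cV[R]_d -> R)
  (l : R -> R) (w : 'cV[R]_d) : R :=
  Ejoint mu xf eta (fun x y => l (y * dotv w x)).

Definition assumption_I (R : realType) (dT : measure_display) (T : measurableType dT)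
  (mu : probability T R) (d : nat) (xf : T -> 'cV[R]_d) (eta : 'cV[R]_d -> R)
  (l : R -> R) (wstar : 'cV[R]_d) (theta : R) : Prop :=
  0 < theta /\
  loewner_ge (grad_cov mu xf eta l wstar) (theta *: second_moment mu xf eta).

Definition assumption_II (R : realType) (dT : measure_display) (T : measurableType dT)
  (mu : probability T R) (d : nat) (xf : T -> 'cV[R]_d) (eta : 'cV[R]_d -> R)
  (l : R -> R) (W : set 'cV[R]_d) (theta : R) : Prop :=
  0 < theta /\
  forall w, W w ->
    loewner_ge (grad_cov mu xf eta l w) (theta *: second_moment mu xf eta).

(* Convexity makes l' nondecreasing, so for every b one of l'(b), l'(-b) is at
   least l'(0) > 0.  Both labels have conditional probability at least q, hence
   E[l'(y w.x)^2 | x] >= q l'(0)^2 for EVERY w, and integrating this pointwise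
   bound against the rank-one matrices x x^T gives
   E[l'(y w.x)^2 x x^T] >= q l'(0)^2 E[x x^T] in the Loewner order. *)

From HB Require Import structures.
From mathcomp Require Import all_boot all_order all_algebra.
From mathcomp Require Import all_classical all_reals all_analysis.
From mathcomp Require Import ring lra measurable_realfun.
Set Implicit Arguments.
Unset Strict Implicit.
Unset Printing Implicit Defensive.
Import Order.TTheory GRing.Theory Num.Theory.
Import numFieldNormedType.Exports.
Local Open Scope classical_set_scope.
Local Open Scope ring_scope.

Section derivative_bounds.
Variable R : realType.
Implicit Types (f : R -> R) (x s : R).

Let diff_quot_cvg f x : derivable f x 1 ->
  h^-1 * (f (h + x) - f x) @[h --> 0^'] --> derive1 f x.
Proof.
move=> df; rewrite derive1E.
have -> : (fun h => h^-1 * (f (h + x) - f x)) =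
    (fun h => h^-1 *: ((f \o shift x) (h *: 1) - f x)).
  by apply/funext => h; rewrite /= [h *: 1]mulr1.
exact: df.
Qed.

Lemma derive1_le_of_right f x s : derivable f x 1 ->
  (\forall h \near 0^'+, f (h + x) - f x <= h * s) -> derive1 f x <= s.
Proof.
move=> /diff_quot_cvg/cvg_dnbhs_at_right df hs; apply: (cvgr_to_le df).
near=> h; have h0 : 0 < h by near: h; exact: nbhs_right_gt.
by rewrite ler_pdivrMl //; near: h.
Unshelve. all: by end_near.
Qed.

Lemma derive1_ge_of_left f x s : derivable f x 1 ->
  (\forall h \near 0^'-, f (h + x) - f x <= h * s) -> s <= derive1 f x.
Proof.
move=> /diff_quot_cvg/cvg_dnbhs_at_left df hs; apply: (cvgr_to_ge df).
near=> h; have h0 : h < 0 by near: h; exact: nbhs_left_lt.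
by rewrite ler_ndivlMl //; near: h.
Unshelve. all: by end_near.
Qed.

End derivative_bounds.

Section convex_derivative.
Variables (R : realType) (f : R -> R).
Hypotheses (f_convex : convex_function (E := R^o) setT f)
  (f_derivable : forall x, derivable f x 1).

Lemma convex_chord_le x y t : 0 <= t <= 1 ->
  f (t * (y - x) + x) - f x <= t * (f y - f x).
Proof.
move=> /andP[t0 t1].
have := @f_convex (Itv01 t0 t1) (y : R^o) (x : R^o) (in_setT _) (in_setT _).
have -> : conv (Itv01 t0 t1) (y : convex_lmodType R^o) x = t * (y - x) + x :> R.
  by change (t * y + (1 - t) * x = t * (y - x) + x); ring.
rewrite convRE /unstable.onem /=; lra.
Qed.

Lemma derive1_le_slope x y : x < y -> derive1 f x <= (f y - f x) / (y - x).
Proof.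
move=> xy; have yx0 : 0 < y - x by rewrite subr_gt0.
apply: derive1_le_of_right => //.
near=> h; have h0 : 0 < h by near: h; exact: nbhs_right_gt.
have hyx : h < y - x by near: h; exact: nbhs_right_lt.
have t01 : 0 <= h / (y - x) <= 1.
  by apply/andP; split;
    [rewrite divr_ge0 // ltW | rewrite ler_pdivrMr // mul1r ltW].
have := convex_chord_le x y t01.
by rewrite mulfVK ?gt_eqF // mulrAC -mulrA.
Unshelve. all: by end_near.
Qed.

Lemma slope_le_derive1 x y : x < y -> (f y - f x) / (y - x) <= derive1 f y.
Proof.
move=> xy; have xy0 : x - y < 0 by rewrite subr_lt0.
apply: derive1_ge_of_left => //.
near=> h; have h0 : h < 0 by near: h; exact: nbhs_left_lt.
have hxy : x - y < h by near: h; exact: nbhs_left_gt.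
have t01 : 0 <= h / (x - y) <= 1.
  by apply/andP; split;
    [apply: mulr_le0; rewrite ?invr_le0 ltW | rewrite ler_ndivrMr // mul1r ltW].
have := convex_chord_le y x t01.
rewrite mulfVK ?lt_eqF // => /le_trans; apply.
rewrite -mulrA; apply: ler_wnM2l; first exact: ltW.
by rewrite -(opprB x y) -(opprB (f x) (f y)) invrN mulrNN mulrC.
Unshelve. all: by end_near.
Qed.

Lemma convex_derive1_nondecreasing : {homo derive1 f : x y / x <= y}.
Proof.
move=> x y; rewrite le_eqVlt => /predU1P[-> //|xy].
exact: le_trans (derive1_le_slope xy) (slope_le_derive1 xy).
Qed.

Lemma sqr_derive1_0_le z : 0 <= derive1 f 0 -> 0 <= z ->
  derive1 f 0 ^+ 2 <= derive1 f z ^+ 2.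
Proof.
move=> f'0 z0; have f'z := convex_derive1_nondecreasing z0.
by rewrite ler_sqr // nnegrE (le_trans f'0 f'z).
Qed.

Lemma sqr_derive1_mix_ge q e b : 0 <= derive1 f 0 -> 0 <= q ->
  q <= e -> q <= 1 - e ->
  q * derive1 f 0 ^+ 2 <= e * derive1 f b ^+ 2 + (1 - e) * derive1 f (- b) ^+ 2.
Proof.
move=> f'0 q0 qe qe'.
have weight_ge0 c z : q <= c -> 0 <= c * derive1 f z ^+ 2.
  by move=> qc; rewrite mulr_ge0 ?sqr_ge0 ?(le_trans q0).
have [b0|b0] := leP 0 b.
  rewrite -[leLHS]addr0; apply: lerD; last exact: weight_ge0.
  by rewrite ler_pM ?sqr_ge0 ?sqr_derive1_0_le.
rewrite -[leLHS]add0r; apply: lerD; first exact: weight_ge0.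
by rewrite ler_pM ?sqr_ge0 ?sqr_derive1_0_le // oppr_ge0 ltW.
Qed.

End convex_derivative.

Section quadratic_form.
Variables (R : realType) (d : nat).
Implicit Types (A B : 'M[R]_d) (v x : 'cV[R]_d).

Definition qform A v : R := (v^T *m A *m v) 0 0.

Lemma qformE A v : qform A v = \sum_(i < d) \sum_(j < d) v i 0 * A i j * v j 0.
Proof.
rewrite /qform mxE exchange_big; apply: eq_bigr => i _.
by rewrite mxE mulr_suml; apply: eq_bigr => j _; rewrite !mxE.
Qed.

Lemma qformB A B v : qform (A - B) v = qform A v - qform B v.
Proof. by rewrite /qform mulmxBr mulmxBl !mxE. Qed.

Lemma qformZ c A v : qform (c *: A) v = c * qform A v.
Proof. by rewrite /qform -scalemxAr -scalemxAl mxE. Qed.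

Lemma loewner_geE A B : loewner_ge A B <-> forall v, qform B v <= qform A v.
Proof.
have E v : (v^T *m (A - B) *m v) 0 0 = qform A v - qform B v by exact: qformB.
by split=> AB v; [rewrite -subr_ge0 -E | rewrite /loewner_ge E subr_ge0].
Qed.

Lemma qform_outer x v : qform (x *m x^T) v = dotv v x ^+ 2.
Proof.
rewrite qformE expr2 /dotv mulr_suml; apply: eq_bigr => i _.
rewrite mulr_sumr; apply: eq_bigr => j _; rewrite !mxE big_ord1 mxE; ring.
Qed.

Lemma loewner_ge_scale_outer a b x : a <= b ->
  loewner_ge (b *: (x *m x^T)) (a *: (x *m x^T)).
Proof.
move=> ab; apply/loewner_geE => v.
by rewrite !qformZ qform_outer ler_wpM2r ?sqr_ge0.
Qed.

End quadratic_form.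

Section matrix_integral.
Context {R : realType} {dT : measure_display} {T : measurableType dT}
  (mu : {measure set T -> \bar R}).
Local Notation Rintegrable f := (mu.-integrable setT (EFin \o f)).

Lemma Rintegrable_eq (h : T -> \bar R) (f : T -> R) :
  mu.-integrable setT h -> (forall t, h t = (f t)%:E) -> Rintegrable f.
Proof. by move=> Ih hf; apply: (eq_integrable measurableT _ _ _ Ih) => t _. Qed.

Lemma Rintegrable_add (f g : T -> R) :
  Rintegrable f -> Rintegrable g -> Rintegrable (fun t => f t + g t).
Proof.
by move=> If Ig; apply: (Rintegrable_eq (integrableD measurableT If Ig)) => t;
  rewrite /= EFinD.
Qed.

Lemma Rintegrable_scale (c : R) (f : T -> R) :
  Rintegrable f -> Rintegrable (fun t => c * f t).
Proof.
by move=> If; apply: (Rintegrable_eq (integrableZl measurableT c If)) => t;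
  rewrite /= EFinM.
Qed.

Lemma Rintegrable_mul_bounded (h f : T -> R) :
  measurable_fun setT h -> [bounded h t | t in setT] ->
  Rintegrable f -> Rintegrable (fun t => h t * f t).
Proof.
move=> mh bh If; apply: (Rintegrable_eq (integrableMr measurableT mh bh If)).
by move=> t; rewrite /= EFinM.
Qed.

Lemma Rintegrable_sum I (s : seq I) (F : I -> T -> R) :
  (forall i, Rintegrable (F i)) -> Rintegrable (fun t => \sum_(i <- s) F i t).
Proof.
move=> IF; have := integrable_sum measurableT s (P := xpredT) (fun i _ => IF i).
by move/Rintegrable_eq; apply => t; rewrite sumEFin.
Qed.

Lemma Rintegral_sum I (s : seq I) (F : I -> T -> R) :
  (forall i, Rintegrable (F i)) ->
  \int[mu]_(t in setT) \sum_(i <- s) F i t =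
  \sum_(i <- s) \int[mu]_(t in setT) F i t.
Proof.
move=> IF; elim: s => [|i s IHs].
  under eq_Rintegral => t _ do rewrite big_nil.
  by rewrite Rintegral_cst // mul0r big_nil.
under eq_Rintegral => t _ do rewrite big_cons.
by rewrite RintegralD // ?IHs ?big_cons //; exact: Rintegrable_sum.
Qed.

Variable d : nat.
Implicit Types F G : T -> 'M[R]_d.

Definition Rintegral_mx F : 'M[R]_d :=
  \matrix_(i, j) \int[mu]_(t in setT) F t i j.

Definition Rintegrable_mx F := forall i j, Rintegrable (fun t => F t i j).

Lemma Rintegrable_mxZ c F :
  Rintegrable_mx F -> Rintegrable_mx (fun t => c *: F t).
Proof.
move=> IF i j; apply: (Rintegrable_eq (Rintegrable_scale c (IF i j))).
by move=> t; rewrite /= mxE.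
Qed.

Lemma Rintegral_mxZ c F : Rintegrable_mx F ->
  c *: Rintegral_mx F = Rintegral_mx (fun t => c *: F t).
Proof.
move=> IF; apply/matrixP => i j; rewrite !mxE -RintegralZl //.
by apply: eq_Rintegral => t _; rewrite mxE.
Qed.

Lemma Rintegral_mxB F G : Rintegrable_mx F -> Rintegrable_mx G ->
  Rintegral_mx F - Rintegral_mx G = Rintegral_mx (fun t => F t - G t).
Proof.
move=> IF IG; apply/matrixP => i j; rewrite !mxE -RintegralB //.
by apply: eq_Rintegral => t _; rewrite !mxE.
Qed.

Lemma Rintegrable_mxB F G : Rintegrable_mx F -> Rintegrable_mx G ->
  Rintegrable_mx (fun t => F t - G t).
Proof.
move=> IF IG i j.
apply: (Rintegrable_eq (integrableB measurableT (IF i j) (IG i j))).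
by move=> t; rewrite /= !mxE EFinB.
Qed.

Lemma qform_Rintegral_mx F v : Rintegrable_mx F ->
  qform (Rintegral_mx F) v = \int[mu]_(t in setT) qform (F t) v.
Proof.
move=> IF; have Iterm i j : Rintegrable (fun t => v i 0 * F t i j * v j 0).
  by under eq_fun do rewrite mulrAC; exact: Rintegrable_scale.
under eq_Rintegral => t _ do rewrite qformE.
rewrite qformE Rintegral_sum => [|i]; last exact: Rintegrable_sum.
apply: eq_bigr => i _; rewrite Rintegral_sum //; apply: eq_bigr => j _.
rewrite mxE mulrAC -RintegralZl //.
by apply: eq_Rintegral => t _; rewrite mulrAC.
Qed.

Lemma loewner_ge_Rintegral_mx F G : Rintegrable_mx F -> Rintegrable_mx G ->
  (forall t, loewner_ge (F t) (G t)) ->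
  loewner_ge (Rintegral_mx F) (Rintegral_mx G).
Proof.
move=> IF IG FG v; rewrite /loewner_ge Rintegral_mxB //.
rewrite -/(qform _ v) qform_Rintegral_mx; last exact: Rintegrable_mxB.
by apply: Rintegral_ge0 => t _; exact: FG.
Qed.

End matrix_integral.

Section gradient_covariance.
Context {R : realType} {dT : measure_display} {T : measurableType dT}
  (mu : probability T R) (d : nat) (xf : T -> 'cV[R]_d) (eta : 'cV[R]_d -> R)
  (l : R -> R).

Definition cond_sqr_grad (w x : 'cV[R]_d) : R :=
  eta x * derive1 l (dotv w x) ^+ 2 + (1 - eta x) * derive1 l (- dotv w x) ^+ 2.

Lemma outer_mxE (x : 'cV[R]_d) i j : (x *m x^T) i j = x i 0 * x j 0.
Proof. by rewrite mxE big_ord1 mxE. Qed.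

Lemma second_momentE :
  second_moment mu xf eta = Rintegral_mx mu (fun t => xf t *m (xf t)^T).
Proof.
apply/matrixP => i j; rewrite !mxE; apply: eq_Rintegral => t _.
by rewrite outer_mxE; ring.
Qed.

Lemma grad_covE w : grad_cov mu xf eta l w =
  Rintegral_mx mu (fun t => cond_sqr_grad w (xf t) *: (xf t *m (xf t)^T)).
Proof.
apply/matrixP => i j; rewrite !mxE; apply: eq_Rintegral => t _.
by rewrite !mxE !big_ord1 !mxE mul1r mulN1r /cond_sqr_grad; ring.
Qed.

Lemma Rintegrable_outer :
  (forall i j, mu.-integrable setT (fun t => (xf t i 0 * xf t j 0)%:E)) ->
  Rintegrable_mx mu (fun t => xf t *m (xf t)^T).
Proof.
move=> Isecond i j; apply: (Rintegrable_eq (Isecond i j)) => t.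
by rewrite /= outer_mxE.
Qed.

Lemma Rintegrable_grad_cov w :
  measurable_fun setT (fun t => eta (xf t)) -> (forall x, 0 <= eta x <= 1) ->
  (forall s, s = 1 \/ s = -1 -> forall i j, mu.-integrable setT
     (fun t => (derive1 l (s * dotv w (xf t)) ^+ 2
                * (xf t i 0 * xf t j 0))%:E)) ->
  Rintegrable_mx mu (fun t => cond_sqr_grad w (xf t) *: (xf t *m (xf t)^T)).
Proof.
move=> eta_meas eta01 Igrad i j.
have bounded01 (h : T -> R) :
    (forall t, 0 <= h t <= 1) -> [bounded h t | t in setT].
  move=> h01; exists 1; split => // M M1 t _ /=.
  by have /andP[h0 h1] := h01 t; rewrite ger0_norm // (le_trans h1) // ltW.
under eq_fun do
  rewrite /cond_sqr_grad !mxE big_ord1 !mxE mulrDl -2![_ * _ ^+ 2 * _]mulrA.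
apply: Rintegrable_add; apply: Rintegrable_mul_bounded.
- exact: eta_meas.
- by apply: bounded01 => t; exact: eta01.
- apply: (Rintegrable_eq (Igrad 1 (or_introl erefl) i j)) => t.
  by rewrite /= mul1r.
- exact: measurable_funB.
- by apply: bounded01 => t; have := eta01 (xf t); lra.
- apply: (Rintegrable_eq (Igrad (-1) (or_intror erefl) i j)) => t.
  by rewrite /= mulN1r.
Qed.

End gradient_covariance.

Theorem lemma1 (R : realType) (dT : measure_display) (T : measurableType dT)
  (mu : probability T R) (d : nat) (X : set 'cV[R]_d)
  (xf : T -> 'cV[R]_d) (eta : 'cV[R]_d -> R)
  (Rad : R) (l : R -> R) (wstar : 'cV[R]_d) (q : R) :
  (* the distribution P on X x {-1,+1} *)
  (forall t, X (xf t)) ->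
  (forall i : 'I_d, measurable_fun setT (fun t => xf t i 0)) ->
  measurable_fun setT (fun t => eta (xf t)) ->
  (forall x, 0 <= eta x <= 1) ->
  (* the expectations in Assumptions (I)/(II) exist (finite) *)
  (forall i j : 'I_d,
     mu.-integrable setT (fun t => (xf t i 0 * xf t j 0)%:E)) ->
  (forall w : 'cV[R]_d, enorm w <= Rad -> forall (s : R), (s = 1 \/ s = -1) ->
     forall i j : 'I_d,
     mu.-integrable setT
       (fun t => ((derive1 l (s * dotv w (xf t))) ^+ 2 * (xf t i 0 * xf t j 0))%:E)) ->
  (* R > 0, W = closed ball of radius R *)
  0 < Rad ->
  (* l : R -> R_+ convex, differentiable *)
  (forall z, 0 <= l z) ->
  convex_function (E := R^o) setT l ->
  (forall z : R, derivable l z 1) ->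
  (* w_* minimizes the risk over W *)
  enorm wstar <= Rad ->
  (forall w, enorm w <= Rad -> risk mu xf eta l wstar <= risk mu xf eta l w) ->
  (* (i) *)
  0 < q ->
  (forall x, X x -> q <= eta x /\ q <= 1 - eta x) ->
  (* (ii) *)
  0 < derive1 l 0 ->
  exists theta : R,
    q * (derive1 l 0) ^+ 2 <= theta /\
    assumption_I mu xf eta l wstar theta /\
    assumption_II mu xf eta l [set w | enorm w <= Rad] theta.
Proof.
move=> inX _ eta_meas eta01 Isecond Igrad _ _ l_convex l_derivable wstar_in _
  q_gt0 q_le_eta l'0_gt0.
pose theta := q * derive1 l 0 ^+ 2.
have theta_gt0 : 0 < theta by rewrite mulr_gt0 // exprn_gt0.
suff grad_cov_ge w : enorm w <= Rad ->
    loewner_ge (grad_cov mu xf eta l w) (theta *: second_moment mu xf eta).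
  by exists theta; split; [|split; split => //; exact: grad_cov_ge].
move=> w_in; have Iouter := Rintegrable_outer Isecond.
rewrite grad_covE second_momentE Rintegral_mxZ //.
apply: loewner_ge_Rintegral_mx.
- exact: Rintegrable_grad_cov eta_meas eta01 (Igrad w w_in).
- exact: Rintegrable_mxZ.
- move=> t; apply: loewner_ge_scale_outer; have [qe qe'] := q_le_eta _ (inX t).
  exact: (sqr_derive1_mix_ge l_convex l_derivable _ (ltW l'0_gt0) (ltW q_gt0)).
Qed.
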